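(* Let $t$ be a regular term and $r$ an arbitrary term in the language of strong quasi-Wajsberg* algebras. Then the equation $(r\to r)\to t\approx t$ is valid in all strong quasi-Wajsberg* algebras.
   Context: A quasi-Wajsberg* algebra is an algebra $\langle W;\to,\neg,{}^+,{}^-,1\rangle$ of type $\langle 2,1,1,1,0\rangle$ (${}^+,{}^-$ bind more tightly than $\neg$, which binds more tightly than $\to$) such that for all $x,y,z$: (1) $x\to y=\neg y\to\neg x$; (2) $(x\to 1)\to((y\to 1)\to z)=(y\to 1)\to((x\to 1)\to z)$; (3) $(1\to x)\to 1=1$; (4) $(z\to z)\to(x\to y)=x\to y$; (5) $(1\to 1)\to x^{+}=((1\to 1)\to x)^{+}=(x\to 1)\to 1$ and $(1\to 1)\to x^{-}=((1\to 1)\to x)^{-}=(x\to\neg 1)\to\neg 1$; (6) $x\to y=(y^{+}\to x^{-})\to(x^{+}\to y^{-})$; (7) $\neg(x\to y)=y\to x$; (8) $\neg\neg x=x$; (9) $(x\to(\neg x\to y))^{+}=x^{+}\to(\neg x^{+}\to y^{+})$; (10) $x\vee y=y\vee x$; (11) $x\vee(y\vee z)=(x\vee y)\vee z$; (12) $x\to(y\vee z)=(x\to y)\vee(x\to z)$; where $x\vee y:=((x^{+}\to y^{+})^{+}\to(\neg x)^{-})\to((y^{-}\to x^{-})^{-}\to x^{-})$. A strong quasi-Wajsberg* algebra is a quasi-Wajsberg* algebra satisfying $x^+=(1\to 1)\to x^+$ and $x^-=(1\to 1)\to x^-$. Terms in the language of strong quasi-Wajsberg* algebras are built from variables and the constant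 $1$ using $\to,\neg,{}^+,{}^-$. A term is regular if it contains an occurrence of $\to$ or of the constant $1$. *)

Record QWStruct := {
  carrier :> Type;
  imp : carrier -> carrier -> carrier;
  neg : carrier -> carrier;
  plus : carrier -> carrier;
  minus : carrier -> carrier;
  one : carrier
}.

Definition qjoin (W : QWStruct) (x y : W) : W :=
  imp W (imp W (plus W (imp W (plus W x) (plus W y))) (minus W (neg W x)))
        (imp W (minus W (imp W (minus W y) (minus W x))) (minus W x)).

Definition is_quasi_wajsberg_star (W : QWStruct) : Prop :=
  let i := imp W in let n := neg W in let p := plus W in
  let m := minus W in let o := one W in
  (forall x y, i x y = i (n y) (n x)) /\
  (forall x y z, i (i x o) (i (i y o) z) = i (i y o) (i (i x o) z)) /\
  (forall x, i (i o x) o = o) /\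
  (forall x y z, i (i z z) (i x y) = i x y) /\
  (forall x, i (i o o) (p x) = p (i (i o o) x) /\
             p (i (i o o) x) = i (i x o) o) /\
  (forall x, i (i o o) (m x) = m (i (i o o) x) /\
             m (i (i o o) x) = i (i x (n o)) (n o)) /\
  (forall x y, i x y = i (i (p y) (m x)) (i (p x) (m y))) /\
  (forall x y, n (i x y) = i y x) /\
  (forall x, n (n x) = x) /\
  (forall x y, p (i x (i (n x) y)) = i (p x) (i (n (p x)) (p y))) /\
  (forall x y, qjoin W x y = qjoin W y x) /\
  (forall x y z, qjoin W x (qjoin W y z) = qjoin W (qjoin W x y) z) /\
  (forall x y z, i x (qjoin W y z) = qjoin W (i x y) (i x z)).

Definition is_strong_quasi_wajsberg_star (W : QWStruct) : Prop :=
  is_quasi_wajsberg_star W /\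
  (forall x, plus W x = imp W (imp W (one W) (one W)) (plus W x)) /\
  (forall x, minus W x = imp W (imp W (one W) (one W)) (minus W x)).

Inductive term : Type :=
  | TVar : nat -> term
  | TOne : term
  | TImp : term -> term -> term
  | TNeg : term -> term
  | TPlus : term -> term
  | TMinus : term -> term.

Fixpoint eval (W : QWStruct) (v : nat -> W) (t : term) : W :=
  match t with
  | TVar k => v k
  | TOne => one W
  | TImp a b => imp W (eval W v a) (eval W v b)
  | TNeg a => neg W (eval W v a)
  | TPlus a => plus W (eval W v a)
  | TMinus a => minus W (eval W v a)
  end.

Fixpoint regular (t : term) : bool :=
  match t with
  | TVar _ => false
  | TOne => true
  | TImp _ _ => true
  | TNeg a => regular a
  | TPlus a => regular a
  | TMinus a => regular a
  end.

Definition valid_in (W : QWStruct) (s u : term) : Prop :=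
  forall v : nat -> W, eval W v s = eval W v u.


(* Every regular term denotes an implication: 1 = (1 -> 1) -> 1 by (3),
   ~(a -> b) = b -> a by (7), and x^+, x^- are of the form (1 -> 1) -> _ in a
   strong algebra.  Axiom (4) says that r -> r acts trivially on implications. *)

Section StrongQuasiWajsberg.

Variable W : QWStruct.
Hypothesis HW : is_strong_quasi_wajsberg_star W.

Definition is_imp (x : W) : Prop := exists p q, x = imp W p q.

Lemma regular_eval_is_imp (v : nat -> W) (t : term) :
  regular t = true -> is_imp (eval W v t).
Proof.
  destruct HW as [[_ [_ [Hone [_ [_ [_ [_ [Hneg _]]]]]]]] [Hplus Hminus]].
  unfold is_imp.
  induction t as [k| |a _ b _|a IH|a _|a _]; simpl; intro Hreg.
  - discriminate.
  - exists (imp W (one W) (one W)), (one W). symmetry. apply Hone.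
  - eauto.
  - destruct (IH Hreg) as [p [q E]]. rewrite E, Hneg. eauto.
  - rewrite Hplus. eauto.
  - rewrite Hminus. eauto.
Qed.

Lemma imp_refl_imp_is_imp (z x : W) : is_imp x -> imp W (imp W z z) x = x.
Proof.
  destruct HW as [[_ [_ [_ [Hrefl _]]]] _].
  intros [p [q ->]]. apply Hrefl.
Qed.

End StrongQuasiWajsberg.

Theorem proposition3p6 (t r : term) :
  regular t = true ->
  forall W : QWStruct, is_strong_quasi_wajsberg_star W ->
    valid_in W (TImp (TImp r r) t) t.
Proof.
  intros Hreg W HW v. simpl.
  apply imp_refl_imp_is_imp; [exact HW |].
  apply regular_eval_is_imp; assumption.
Qed.
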